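(* For all $n,k\geq 1$, the space $\overline{\mathrm{SP}}^n(\bigvee^kS^1)$ is homeomorphic to the $n$-skeleton of the torus $(S^1)^k$, where $(S^1)^k$ carries the product CW structure in which each circle factor has one $0$-cell (the identity) and one $1$-cell.
   Context: Each circle of the wedge $\bigvee^kS^1$ is identified with the circle group $S^1$, the wedge point being the identity $1$ of each. $\mathrm{SP}^nY=Y^n/\Sigma_n$ is the $n$-th symmetric product, with points $\langle x_1,\ldots,x_n\rangle$. $\overline{\mathrm{SP}}^n(\bigvee^kS^1)$ is the quotient of $\mathrm{SP}^n(\bigvee^kS^1)$ by the equivalence relation generated by $\langle x,y,z_1,\ldots,z_{n-2}\rangle\sim\langle *,xy,z_1,\ldots,z_{n-2}\rangle$ whenever $x,y$ lie in the same circle, $xy$ being their product in that circle group and $*$ the wedge point. *)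

From HB Require Import structures.
From mathcomp Require Import all_boot all_order all_algebra all_fingroup.
From mathcomp Require Import generic_quotient.
From mathcomp Require Import all_classical all_reals.
From mathcomp Require Import all_analysis wedge_sigT.
From Stdlib Require Import Relation_Operators.
From mathcomp Require Import ring.

Set Implicit Arguments.
Unset Strict Implicit.
Unset Printing Implicit Defensive.
Import Order.TTheory GRing.Theory Num.Theory.
Import numFieldNormedType.Exports.
Local Open Scope classical_set_scope.
Local Open Scope ring_scope.
Local Open Scope quotient_scope.

Definition homeomorphic (X Y : topologicalType) : Prop :=
  exists (f : X -> Y) (g : Y -> X),
    continuous f /\ continuous g /\ cancel f g /\ cancel g f.

Section EqClos.
Variables (T : choiceType) (r : T -> T -> Prop).
Definition eqclos_b (x y : T) : bool := `[< clos_refl_sym_trans T r x y >].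
Lemma eqclos_refl : reflexive eqclos_b.
Proof. by move=> x; apply/asboolP; apply: rst_refl. Qed.
Lemma eqclos_sym : symmetric eqclos_b.
Proof.
by move=> x y; apply/asboolP/asboolP => ?; apply: rst_sym.
Qed.
Lemma eqclos_trans : transitive eqclos_b.
Proof.
move=> y x z /asboolP Hxy /asboolP Hyz; apply/asboolP.
exact: rst_trans Hxy Hyz.
Qed.
Definition eqclos : equiv_rel T :=
  @EquivRelPack T eqclos_b (EquivClass eqclos_refl eqclos_sym eqclos_trans).
End EqClos.

Definition quot_space (X : topologicalType) (r : X -> X -> Prop) : topologicalType :=
  quotient_topology {eq_quot (eqclos r)}.

Section Circle.
Variable R : realType.
Definition circle_set : set (R * R) := [set p | p.1 ^+ 2 + p.2 ^+ 2 = 1].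
Definition S1 : topologicalType := set_type circle_set.

Lemma circle_one : ((1 : R), (0 : R)) \in circle_set.
Proof. by apply/mem_set; rewrite /circle_set /= expr1n expr0n addr0. Qed.
Definition S1_one : S1 := exist _ (1, 0) circle_one.

(* complex multiplication of points of the unit circle *)
Definition cmul (p q : R * R) : R * R :=
  (p.1 * q.1 - p.2 * q.2, p.1 * q.2 + p.2 * q.1).
Lemma circle_mul (p q : R * R) :
  p \in circle_set -> q \in circle_set -> cmul p q \in circle_set.
Proof.
rewrite !inE /circle_set /= => hp hq.
have -> : (p.1 * q.1 - p.2 * q.2) ^+ 2 + (p.1 * q.2 + p.2 * q.1) ^+ 2
  = (p.1 ^+ 2 + p.2 ^+ 2) * (q.1 ^+ 2 + q.2 ^+ 2) by ring.
by rewrite hp hq mulr1.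
Qed.
Definition S1_mul (x y : S1) : S1 :=
  exist _ (cmul (sval x) (sval y)) (circle_mul (svalP x) (svalP y)).
End Circle.

(* each circle of the wedge is a copy of the circle group, glued at the
   identity 1; we use the library's wedge construction (quotient of the
   disjoint union {i : 'I_k & S1} identifying the basepoints). *)
Definition wedge_circles (R : realType) (k : nat) : topologicalType :=
  @wedge _ (fun _ : 'I_k => S1 R) (fun _ : 'I_k => (S1_one R : S1 R)).

Definition circ_incl (R : realType) (k : nat) (i : 'I_k) : S1 R -> wedge_circles R k :=
  @wedge_lift _ (fun _ : 'I_k => S1 R) (fun _ : 'I_k => (S1_one R : S1 R)) i.

Definition power_space (Y : topologicalType) (n : nat) : topologicalType :=
  {ptws 'I_n -> Y}.

Definition perm_rel (Y : topologicalType) (n : nat) (u v : power_space Y n) : Prop :=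
  exists s : 'S_n, v = u \o s.

Definition SP (Y : topologicalType) (n : nat) : topologicalType :=
  quot_space (@perm_rel Y n).

Definition SP_pt (Y : topologicalType) (n : nat) (u : power_space Y n) : SP Y n :=
  \pi_(SP Y n) u.

(* <x, y, z_1, ..., z_{n-2}> ~ <*, xy, z_1, ..., z_{n-2}> whenever x, y lie in
   the same circle (number c), xy being their product in that circle group and
   * the wedge point.  The two entries x, y may sit at any two distinct
   positions i0, i1 of a representing tuple u (points of SP^n are unordered). *)
Definition SPbar_rel (R : realType) (k n : nat) (P Q : SP (wedge_circles R k) n) : Prop :=
  exists (u : power_space (wedge_circles R k) n) (i0 i1 : 'I_n) (c : 'I_k) (x y : S1 R),
    [/\ i0 != i1, u i0 = circ_incl c x, u i1 = circ_incl c y,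
        P = SP_pt u &
        Q = SP_pt ((fun j => if j == i0 then circ_incl c (S1_one R)
                             else if j == i1 then circ_incl c (S1_mul x y)
                             else u j) : power_space (wedge_circles R k) n)].

Definition SPbar (R : realType) (k n : nat) : topologicalType :=
  quot_space (@SPbar_rel R k n).

Definition torus (R : realType) (k : nat) : topologicalType := power_space (S1 R) k.

(* Product CW structure: each circle factor has the 0-cell {1} and the 1-cell
   S^1 \ {1}.  The cells of (S^1)^k are indexed by J \subset 'I_k:
   e_J = { f | f i <> 1 exactly for i in J }, of dimension #|J|. *)
Definition torus_cell (R : realType) (k : nat) (J : {set 'I_k}) : set (torus R k) :=
  [set f | forall i, (f i != S1_one R) = (i \in J)].

Definition torus_skeleton_set (R : realType) (k n : nat) : set (torus R k) :=
  \bigcup_(J in [set J : {set 'I_k} | (#|J| <= n)%N]) @torus_cell R k J.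

Definition torus_skeleton (R : realType) (k n : nat) : topologicalType :=
  set_type (@torus_skeleton_set R k n).

From HB Require Import structures.
From mathcomp Require Import all_boot all_order all_algebra all_fingroup.
From mathcomp Require Import all_classical all_reals all_analysis.
From mathcomp Require Import generic_quotient wedge_sigT.
From Stdlib Require Import Relation_Operators.
From mathcomp Require Import ring lra.

Set Implicit Arguments.
Unset Strict Implicit.
Unset Printing Implicit Defensive.
Import numFieldNormedType.Exports.
Local Open Scope classical_set_scope.
Local Open Scope ring_scope.
Local Open Scope quotient_scope.

(** Multiplying, circle by circle, the entries of a tuple of points of the
    wedge gives a continuous map from the tuples to the torus [(S^1)^k]; it is
    invariant under permutations and under merging two entries of the same
    circle, so it descends to [SPbar^n]. A tuple has at most [n] entries off the
    wedge point, so its product has at most [n] coordinates different from [1]: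
    it lies in the [n]-skeleton, and every point of the skeleton is the product
    of the tuple listing its nontrivial coordinates, padded with wedge points.
    Merging lowers the number of entries off the wedge point, so every class of
    [SPbar^n] contains a tuple with at most one such entry on each circle, and
    such a tuple is determined up to order by its product. A continuous
    bijection from the compact space [SPbar^n] onto the Hausdorff skeleton is a
    homeomorphism. *)

Lemma injective_hausdorff (X Y : topologicalType) (f : X -> Y) :
  continuous f -> injective f -> hausdorff_space Y -> hausdorff_space X.
Proof.
move=> cf injf hY p q cl; apply: injf; apply: hY => A B nA nB.
by have [z [Az Bz]] := cl _ _ (cf p _ nA) (cf q _ nB); exists (f z).
Qed.

Lemma set_type_hausdorff (T : topologicalType) (A : set T) :
  hausdorff_space T -> hausdorff_space (set_type A).
Proof. by apply: injective_hausdorff; [exact: initial_continuous | exact: val_inj]. Qed.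

Lemma continuous_into_set_type (X T : topologicalType) (A : set T) (f : X -> set_type A) :
  continuous (sval \o f) -> continuous f.
Proof. exact: continuous_comp_initial. Qed.

Lemma compact_hausdorff_homeomorphic (X Y : topologicalType) (f : X -> Y) (g : Y -> X) :
  compact [set: X] -> hausdorff_space Y -> continuous f -> cancel f g -> cancel g f ->
  homeomorphic X Y.
Proof.
move=> cX hY cf fK gK; exists f, g; split=> //; split=> //.
apply/continuous_closedP => C cC.
have -> : g @^-1` C = f @` C.
  apply/seteqP; split=> y; first by exists (g y); rewrite ?gK.
  by case=> x Cx <-; rewrite /= fK.
apply: compact_closed hY _; apply: continuous_compact.
  exact: continuous_subspaceT.
exact: subclosed_compact cC cX _.
Qed.

Section QuotSpace.
Variables (X : topologicalType) (r : X -> X -> Prop).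
Local Notation Q := (quot_space r).

Lemma quot_space_pi_rel (x y : X) : r x y -> \pi_Q x = \pi_Q y.
Proof. by move=> rxy; apply/eqmodP/asboolP; exact: rst_step. Qed.

Lemma quot_space_pi_inv (Z : Type) (f : X -> Z) :
  (forall x y, r x y -> f x = f y) -> forall x y, \pi_Q x = \pi_Q y -> f x = f y.
Proof.
move=> fr x y /eqmodP/asboolP.
by elim=> [a b /fr | a | a b _ -> | a b c _ -> _ ->].
Qed.

Lemma quot_space_pi_surj (q : Q) : exists x, q = \pi_Q x.
Proof. by exists (repr q); rewrite reprK. Qed.

Lemma quot_space_compact : compact [set: X] -> compact [set: Q].
Proof.
move=> cX; have := continuous_compact (continuous_subspaceT (@pi_continuous _ Q)) cX.
congr compact; apply/seteqP; split=> // q _.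
by have [x ->] := quot_space_pi_surj q; exists x.
Qed.

Definition quot_lift (Z : Type) (f : X -> Z) (q : Q) : Z := f (repr q).

Variables (Z : topologicalType) (f : X -> Z).
Hypothesis f_rel : forall x y, r x y -> f x = f y.

Lemma quot_liftE (x : X) : quot_lift f (\pi_Q x) = f x.
Proof. by apply: quot_space_pi_inv; rewrite ?reprK. Qed.

Lemma quot_lift_continuous : continuous f -> continuous (quot_lift f).
Proof.
move=> cf; apply: (@repr_comp_continuous _ _ _ f cf) => a b /eqP ab.
by apply/eqP; exact: quot_space_pi_inv ab.
Qed.

End QuotSpace.

Section CircleGroup.
Variable R : realType.
Local Notation S1 := (S1 R).
Local Notation one := (S1_one R).
Local Notation mul := (@S1_mul R).

Lemma S1_mulA : associative mul.
Proof. by move=> x y z; apply: val_inj; rewrite /= /cmul /=; congr pair; ring. Qed.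

Lemma S1_mulC : commutative mul.
Proof. by move=> x y; apply: val_inj; rewrite /= /cmul /=; congr pair; ring. Qed.

Lemma S1_mul1 : left_id one mul.
Proof.
move=> x; apply: val_inj; rewrite /= /cmul /=.
by case: (sval x) => a b /=; congr pair; ring.
Qed.

Lemma S1_mulr1 : right_id one mul.
Proof. by move=> x; rewrite S1_mulC S1_mul1. Qed.

Lemma S1_hausdorff : hausdorff_space S1.
Proof. exact/set_type_hausdorff/(@norm_hausdorff R). Qed.

Lemma circle_compact : compact (@circle_set R).
Proof.
pose sq (p : R * R) := p.1 ^+ 2 + p.2 ^+ 2.
have sq_continuous : continuous sq.
  by move=> p; apply: cvgD; apply: cvgM; first [apply: cvg_fst | apply: cvg_snd].
have -> : @circle_set R = sq @^-1` [set x | x = 1] by [].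
apply: (subclosed_compact _ (compact_setX (@segment_compact R (-1) 1)
                                          (@segment_compact R (-1) 1))).
  by apply: preimage_closed; [move=> p _; exact: sq_continuous | exact: closed_eq].
move=> [a b]; rewrite /sq /= => h.
by split; rewrite /= in_itv /=; apply/andP; split; nra.
Qed.

Lemma S1_compact : compact [set: S1].
Proof.
pose f (p : R * R) : S1 := insubd one p.
have fK : {in @circle_set R, cancel f sval}.
  by move=> p /set_mem circ_p; rewrite /f insubdK //; exact: mem_set.
have cf : {within @circle_set R, continuous f}.
  apply/subspace_sigL_continuousP.
  suff -> : sigL (@circle_set R) f = id by move=> x.
  by apply: funext => x; apply: val_inj; rewrite /sigL /= fK //; case: x => /= p /set_mem.
have := continuous_compact cf circle_compact.
congr compact; apply/seteqP; split=> // x _.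
by exists (sval x); [case: x => /= ? /set_mem | exact: valKd].
Qed.

Lemma S1_mul_continuous (X : topologicalType) (f g : X -> S1) :
  continuous f -> continuous g -> continuous (fun x => mul (f x) (g x)).
Proof.
have val_continuous : continuous (sval : S1 -> R * R) := @initial_continuous _ _ _.
have coord1 (h : X -> S1) : continuous h -> continuous (fun y => (sval (h y)).1).
  move=> ch y; apply: continuous_comp (continuous_comp (ch y) (val_continuous _)) _.
  exact: cvg_fst.
have coord2 (h : X -> S1) : continuous h -> continuous (fun y => (sval (h y)).2).
  move=> ch y; apply: continuous_comp (continuous_comp (ch y) (val_continuous _)) _.
  exact: cvg_snd.
move=> cf cg; apply: continuous_into_set_type => x.
have [[[f1 f2] g1] g2] := (coord1 f cf x, coord2 f cf x, coord1 g cg x, coord2 g cg x).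
exact: cvg_pair (cvgB (cvgM f1 g1) (cvgM f2 g2)) (cvgD (cvgM f1 g2) (cvgM f2 g1)).
Qed.

End CircleGroup.

HB.instance Definition _ (R : realType) :=
  Monoid.isComLaw.Build (S1 R) (S1_one R) (@S1_mul R)
    (@S1_mulA R) (@S1_mulC R) (@S1_mul1 R).

Section WedgeCoordinates.
Variables (R : realType) (k : nat).
Local Notation W := (wedge_circles R k).
Local Notation S1 := (S1 R).
Local Notation one := (S1_one R).
Implicit Types (c : 'I_k) (x : S1) (w : W).

(* [wedge_index] picks a circle through [w]; it is arbitrary at the wedge point. *)
Definition wedge_index (w : W) : 'I_k := projT1 (repr w).

Definition wedge_coord : W -> S1 := wedge_fun (fun (_ : 'I_k) (x : S1) => x).

Definition wedge_proj (c : 'I_k) : W -> S1 :=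
  wedge_fun (fun (i : 'I_k) (x : S1) => if i == c then x else one).

Definition off_base (w : W) : bool := wedge_coord w != one.

Lemma wedge_projE c w :
  wedge_proj c w = if wedge_index w == c then wedge_coord w else one.
Proof. by []. Qed.

Lemma circ_incl_index_coord w : circ_incl (wedge_index w) (wedge_coord w) = w.
Proof. by rewrite /circ_incl /wedge_lift /= surjective_existT reprK. Qed.

Lemma wedge_coord_incl c x : wedge_coord (circ_incl c x) = x.
Proof. exact: wedge_lift_funE. Qed.

Lemma wedge_proj_incl c' c x :
  wedge_proj c' (circ_incl c x) = if c == c' then x else one.
Proof. by apply: wedge_lift_funE => i j; case: ifP; case: ifP. Qed.

Lemma circ_incl_one c c' : circ_incl c one = circ_incl c' one.
Proof. exact: (@wedge_liftE _ _ _ c' one c one). Qed.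

Lemma wedge_proj_index w : wedge_proj (wedge_index w) w = wedge_coord w.
Proof. by rewrite wedge_projE eqxx. Qed.

Lemma wedge_proj_ne1 c w : wedge_proj c w != one ->
  [/\ wedge_index w = c, off_base w & w = circ_incl c (wedge_proj c w)].
Proof.
rewrite wedge_projE; case: (eqVneq (wedge_index w) c) => [<- coord_ne1 | _].
  by split; rewrite ?circ_incl_index_coord.
by rewrite eqxx.
Qed.

Lemma on_base c w : ~~ off_base w -> w = circ_incl c one.
Proof.
by rewrite negbK => /eqP w1; rewrite -(circ_incl_index_coord w) w1 (circ_incl_one _ c).
Qed.

Lemma wedge_proj_continuous c : continuous (wedge_proj c).
Proof.
apply: wedge_fun_continuous => [i | i j]; last by case: ifP; case: ifP.
by case: (i == c); [move=> x | exact: cst_continuous].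
Qed.

Lemma wedge_circles_compact : compact [set: W].
Proof. by apply: wedge_compact => [|_]; [exact: finite_finset | exact: S1_compact]. Qed.

End WedgeCoordinates.

Lemma continuous_into_product (X : topologicalType) (I : Type)
    (K : I -> topologicalType) (f : X -> prod_topology K) :
  (forall i, continuous (fun x => f x i)) -> continuous f.
Proof.
move=> cf x; apply/cvg_sup => i.
exact: (@continuous_comp_initial _ X _ (fun g : (forall i, K i) => g i) f (cf i) x).
Qed.

Lemma S1_big_mul_continuous (R : realType) (X : topologicalType) (I : Type)
    (s : seq I) (F : I -> X -> S1 R) :
  (forall i, continuous (F i)) ->
  continuous (fun x => \big[@S1_mul R/S1_one R]_(i <- s) F i x).
Proof.
move=> cF; elim: s => [|i s IH].
  by under eq_fun => x do rewrite big_nil; exact: cst_continuous.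
under eq_fun => x do rewrite big_cons.
exact: S1_mul_continuous.
Qed.

Section WedgeMult.
Variables (R : realType) (k n : nat).
Local Notation W := (wedge_circles R k).
Local Notation Y := (power_space W n).
Local Notation S1 := (S1 R).
Local Notation one := (S1_one R).
Local Notation mul := (@S1_mul R).

Definition wedge_mult (u : Y) : torus R k :=
  fun c => \big[mul/one]_(j < n) wedge_proj c (u j).

(* The tuple in the right-hand side of [SPbar_rel], with [z] standing for [x y]. *)
Definition tuple_merge (u : Y) (i0 i1 : 'I_n) (c : 'I_k) (z : S1) : Y :=
  fun j => if j == i0 then circ_incl c one else if j == i1 then circ_incl c z else u j.

Lemma wedge_mult_continuous : continuous wedge_mult.
Proof.
apply: continuous_into_product => c; apply: S1_big_mul_continuous => j u.
apply: (@continuous_comp _ _ _ (fun v : Y => v j) (wedge_proj c) u).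
  exact: (@proj_continuous _ (fun=> W) j).
exact: wedge_proj_continuous.
Qed.

Lemma wedge_mult_perm (u : Y) (s : 'S_n) : wedge_mult (u \o s : Y) = wedge_mult u.
Proof. by apply: funext => c; rewrite /wedge_mult [RHS](reindex_inj (@perm_inj _ s)). Qed.

Lemma wedge_mult_merge (u : Y) i0 i1 c x y :
  i0 != i1 -> u i0 = circ_incl c x -> u i1 = circ_incl c y ->
  wedge_mult (tuple_merge u i0 i1 c (mul x y)) = wedge_mult u.
Proof.
move=> i01 ui0 ui1; apply: funext => c'; rewrite /wedge_mult /tuple_merge.
rewrite (bigD1 i0) //= [RHS](bigD1 i0) //=.
rewrite (bigD1 i1) 1?eq_sym //= [in RHS](bigD1 i1) 1?eq_sym //=.
rewrite eqxx (negbTE i01) eqxx ui0 ui1 !wedge_proj_incl.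
under eq_bigr => j /andP [/negbTE -> /negbTE ->] do [].
by case: (c == c'); rewrite ?S1_mul1 ?S1_mulA.
Qed.

Lemma wedge_mult_ne1 (u : Y) c :
  wedge_mult u c != one -> exists j, wedge_proj c (u j) != one.
Proof.
move=> mult_c; apply/existsP; apply: contraNT mult_c.
rewrite negb_exists => /forallP none.
by apply/eqP/big1 => j _; apply/eqP; rewrite -[_ == _]negbK none.
Qed.

Lemma wedge_mult_perm_rel (u v : Y) : perm_rel u v -> wedge_mult u = wedge_mult v.
Proof. by case=> s ->; rewrite wedge_mult_perm. Qed.

Definition SP_mult : SP W n -> torus R k := quot_lift wedge_mult.

Lemma SP_mult_pt (u : Y) : SP_mult (SP_pt u) = wedge_mult u.
Proof. exact: (quot_liftE wedge_mult_perm_rel). Qed.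

Lemma SPbar_rel_mult (P Q : SP W n) : SPbar_rel P Q -> SP_mult P = SP_mult Q.
Proof.
case=> u [i0 [i1 [c [x [y [i01 ui0 ui1 -> ->]]]]]].
by rewrite !SP_mult_pt wedge_mult_merge.
Qed.

Definition SPbar_mult : SPbar R k n -> torus R k := quot_lift SP_mult.

Definition SPbar_class (u : Y) : SPbar R k n := \pi_(SPbar R k n) (SP_pt u).

Lemma SPbar_mult_class (u : Y) : SPbar_mult (SPbar_class u) = wedge_mult u.
Proof. by rewrite /SPbar_mult (quot_liftE SPbar_rel_mult) SP_mult_pt. Qed.

Lemma SPbar_mult_continuous : continuous SPbar_mult.
Proof.
apply: (quot_lift_continuous SPbar_rel_mult).
apply: (quot_lift_continuous wedge_mult_perm_rel); exact: wedge_mult_continuous.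
Qed.

Lemma SPbar_class_surj (Q : SPbar R k n) : exists u, Q = SPbar_class u.
Proof.
have [P ->] := quot_space_pi_surj Q; have [u ->] := quot_space_pi_surj P.
by exists u.
Qed.

Lemma SPbar_compact : compact [set: SPbar R k n].
Proof.
apply/quot_space_compact/quot_space_compact.
have := @tychonoff 'I_n (fun=> W) (fun=> [set: W]) (fun=> @wedge_circles_compact R k).
by congr compact; apply/seteqP; split.
Qed.

End WedgeMult.

Lemma big_ord_nth_pad (T A : Type) (idx : T) (op : Monoid.law idx) (F : A -> T)
    (s : seq A) (a0 : A) (n : nat) :
  F a0 = idx -> (size s <= n)%N ->
  \big[op/idx]_(j < n) F (nth a0 s j) = \big[op/idx]_(a <- s) F a.
Proof.
move=> Fa0 le_sn; rewrite (big_nth a0) -(big_mkord xpredT (fun j => F (nth a0 s j))).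
rewrite (@big_cat_nat _ _ _ (size s)) //= [X in op _ X]big1_seq ?Monoid.mulm1 //.
by move=> j /andP [_]; rewrite mem_index_iota => /andP [le_sj _]; rewrite nth_default.
Qed.

Section Skeleton.
Variables (R : realType) (k n : nat).
Local Notation W := (wedge_circles R k).
Local Notation Y := (power_space W n).
Local Notation one := (S1_one R).

Lemma torus_skeleton_setE (f : torus R k) :
  torus_skeleton_set n f <-> (#|[set c | f c != one]%SET| <= n)%N.
Proof.
split=> [[J le_Jn f_J] | le_fn].
  by rewrite (_ : [set c | _]%SET = J) //; apply/setP => c; rewrite inE f_J.
by exists [set c | f c != one]%SET => // c; rewrite inE.
Qed.

Lemma wedge_mult_skeleton (u : Y) : torus_skeleton_set n (wedge_mult u).
Proof.
apply/torus_skeleton_setE; rewrite -[n in (_ <= n)%N]card_ord.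
apply: leq_trans (leq_imset_card (fun j => wedge_index (u j)) _).
apply/subset_leq_card/fintype.subsetP => c; rewrite inE => mult_c.
have [j proj_j] := wedge_mult_ne1 mult_c.
by apply/imsetP; exists j => //; case: (wedge_proj_ne1 proj_j).
Qed.

Definition skeleton_tuple (c0 : 'I_k) (f : torus R k) : Y :=
  nth (circ_incl c0 one) [seq circ_incl c (f c) | c <- enum [set c | f c != one]%SET].

Lemma wedge_mult_skeleton_tuple c0 f :
  torus_skeleton_set n f -> wedge_mult (skeleton_tuple c0 f) = f.
Proof.
move=> /torus_skeleton_setE le_fn; apply: funext => c.
rewrite /wedge_mult /skeleton_tuple big_ord_nth_pad; first last.
- by rewrite size_map -cardE.
- by rewrite wedge_proj_incl; case: ifP.
rewrite big_map big_enum /=.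
under eq_bigr => c' _ do rewrite wedge_proj_incl.
rewrite big_mkcond (bigD1 c) //= big1 => [|c' /negbTE c'c].
  by rewrite S1_mulr1 inE eqxx; case: eqVneq.
by rewrite c'c; case: ifP.
Qed.

End Skeleton.

Lemma perm_eq_codom (T : eqType) (n : nat) (u v : 'I_n -> T) :
  perm_eq (codom u) (codom v) -> exists s : 'S_n, v = u \o s.
Proof.
have codom_tuple (f : 'I_n -> T) : codom f = [tuple f j | j < n].
  by rewrite codomE -[RHS]map_tnth_enum; apply: eq_map => j; rewrite tnth_mktuple.
rewrite !codom_tuple perm_sym => /tuple_permP [s us]; exists s; apply: funext => j /=.
by have := congr1 (fun t => nth (v j) t j) us; rewrite !nth_mktuple tnth_mktuple.
Qed.

Section Reduction.
Variables (R : realType) (k n : nat).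
Local Notation W := (wedge_circles R k).
Local Notation Y := (power_space W n).
Local Notation one := (S1_one R).
Local Notation mul := (@S1_mul R).
Local Notation off := (@off_base R k).

Definition reduced (u : Y) : Prop :=
  forall i j c, i != j -> wedge_proj c (u i) != one -> wedge_proj c (u j) = one.

Definition off_base_count (u : Y) : nat := #|[set j | off_base (u j)]%SET|.

Lemma merge_step (u : Y) i j c :
  i != j -> wedge_proj c (u i) != one -> wedge_proj c (u j) != one ->
  exists v, [/\ SPbar_class v = SPbar_class u, wedge_mult v = wedge_mult u
              & (off_base_count v < off_base_count u)%N].
Proof.
move=> ij /wedge_proj_ne1 [_ off_i ui] /wedge_proj_ne1 [_ off_j uj].
exists (tuple_merge u i j c (mul (wedge_proj c (u i)) (wedge_proj c (u j)))); split.
- apply/esym/quot_space_pi_rel.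
  by exists u, i, j, c, (wedge_proj c (u i)), (wedge_proj c (u j)).
- exact: wedge_mult_merge.
rewrite /off_base_count (cardsD1 i [set l | off_base (u l)]%SET) inE off_i add1n ltnS.
apply/subset_leq_card/fintype.subsetP => l; rewrite !inE /tuple_merge.
case: eqVneq => [-> | _] /=; first by rewrite /off_base wedge_coord_incl eqxx.
by case: eqVneq => [-> _ | _ //]; exact: off_j.
Qed.

Lemma exists_reduced (u : Y) :
  exists v, [/\ SPbar_class v = SPbar_class u, wedge_mult v = wedge_mult u & reduced v].
Proof.
have [m lt_um] := ubnP (off_base_count u); elim: m u lt_um => // m IH u /ltnSE le_um.
have [[i [j [c [ij ui uj]]]] | none] := pselect (exists i j c,
  [/\ i != j, wedge_proj c (u i) != one & wedge_proj c (u j) != one]).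
  have [v [Ev Mv lt_vu]] := merge_step ij ui uj.
  have [w [Ew Mw red_w]] := IH v (leq_trans lt_vu le_um).
  by exists w; rewrite Ew Mw.
exists u; split=> // i j c ij ui; apply/eqP/negPn/negP => uj.
by apply: none; exists i, j, c.
Qed.

Lemma wedge_mult_reduced (u : Y) j c : reduced u -> wedge_proj c (u j) != one ->
  wedge_mult u c = wedge_proj c (u j).
Proof.
move=> red_u uj; rewrite /wedge_mult (bigD1 j) //= big1 => [|i ij].
  by rewrite S1_mulr1.
by apply: red_u uj; rewrite eq_sym.
Qed.

Lemma reduced_mem (u : Y) w : reduced u -> off_base w ->
  (w \in codom u) = (wedge_mult u (wedge_index w) == wedge_coord w).
Proof.
move=> red_u off_w; apply/codomP/eqP => [[j wj] | mult_w].
  have uj : wedge_proj (wedge_index w) (u j) != one by rewrite -wj wedge_proj_index.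
  by rewrite (wedge_mult_reduced red_u uj) wj wedge_proj_index.
have [j uj] : exists j, wedge_proj (wedge_index w) (u j) != one.
  by apply: wedge_mult_ne1; rewrite mult_w.
exists j; have [_ _ ->] := wedge_proj_ne1 uj.
by rewrite -(wedge_mult_reduced red_u uj) mult_w circ_incl_index_coord.
Qed.

Lemma reduced_uniq (u : Y) : reduced u -> uniq [seq w <- codom u | off_base w].
Proof.
move=> red_u; rewrite codomE filter_map map_inj_in_uniq.
  exact/filter_uniq/enum_uniq.
move=> i j; rewrite !mem_filter => /andP [off_i _] _ uij.
apply/eqP; apply: contraT => ij.
have := red_u i j (wedge_index (u i)) ij; rewrite -uij wedge_proj_index.
by move=> /(_ off_i) /eqP; rewrite (negbTE off_i).
Qed.

Lemma reduced_perm_eq (c0 : 'I_k) (u v : Y) : reduced u -> reduced v ->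
  wedge_mult u = wedge_mult v -> perm_eq (codom u) (codom v).
Proof.
move=> red_u red_v uv.
have off_perm : perm_eq [seq w <- codom u | off w] [seq w <- codom v | off w].
  apply: uniq_perm; rewrite ?reduced_uniq // => w; rewrite !mem_filter.
  by case off_w: (off w) => //=; rewrite !reduced_mem // uv.
have base_nseq (s : seq W) :
    [seq w <- s | predC off w] = nseq (count (predC off) s) (circ_incl c0 one).
  rewrite -size_filter; apply/all_pred1P/allP => w.
  by rewrite mem_filter => /andP [base_w _]; exact/eqP/on_base.
have base_count : count (predC off) (codom u) = count (predC off) (codom v).
  have off_count : count off (codom u) = count off (codom v).
    by rewrite -!size_filter (perm_size off_perm).
  apply/eqP; rewrite -(eqn_add2l (count off (codom u))) {2}off_count.
  by rewrite !count_predC !size_codom.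
apply: (@perm_trans _ ([seq w <- codom u | off w] ++ [seq w <- codom u | predC off w])).
  by rewrite perm_sym perm_filterC.
apply: (@perm_trans _ ([seq w <- codom v | off w] ++ [seq w <- codom v | predC off w])).
  by rewrite !base_nseq base_count perm_cat2r.
by rewrite perm_filterC.
Qed.

Lemma wedge_mult_inj (c0 : 'I_k) (u v : Y) :
  wedge_mult u = wedge_mult v -> SPbar_class u = SPbar_class v.
Proof.
move=> uv; have [u' [<- Mu red_u]] := exists_reduced u.
have [v' [<- Mv red_v]] := exists_reduced v.
have Muv : wedge_mult u' = wedge_mult v' by rewrite Mu Mv.
have [s ->] := perm_eq_codom (reduced_perm_eq c0 red_u red_v Muv).
rewrite /SPbar_class /SP_pt (@quot_space_pi_rel _ (@perm_rel W n) u' (u' \o s)) //.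
by exists s.
Qed.

End Reduction.

Lemma torus_skeleton_hausdorff (R : realType) (k n : nat) :
  hausdorff_space (torus_skeleton R k n).
Proof. by apply/set_type_hausdorff/hausdorff_product => _; exact: S1_hausdorff. Qed.

Theorem mainTheorem2 (R : realType) (n k : nat) :
  (1 <= n)%N -> (1 <= k)%N -> homeomorphic (SPbar R k n) (torus_skeleton R k n).
Proof.
move=> _ k_gt0; pose c0 : 'I_k := Ordinal k_gt0.
have mult_skeleton (Q : SPbar R k n) : SPbar_mult Q \in torus_skeleton_set n.
  have [u ->] := SPbar_class_surj Q; rewrite SPbar_mult_class.
  exact/mem_set/wedge_mult_skeleton.
pose F (Q : SPbar R k n) : torus_skeleton R k n :=
  exist _ (SPbar_mult Q) (mult_skeleton Q).
pose G (f : torus_skeleton R k n) : SPbar R k n :=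
  SPbar_class (skeleton_tuple c0 (sval f)).
have FK : cancel F G.
  move=> Q; have [u ->] := SPbar_class_surj Q; apply: (wedge_mult_inj c0).
  by rewrite /= SPbar_mult_class wedge_mult_skeleton_tuple //; exact: wedge_mult_skeleton.
have GK : cancel G F.
  move=> f; apply: val_inj; rewrite /= SPbar_mult_class wedge_mult_skeleton_tuple //.
  exact: set_mem (valP f).
apply: (compact_hausdorff_homeomorphic _ _ _ FK GK).
- exact: SPbar_compact.
- exact: torus_skeleton_hausdorff.
- exact/continuous_into_set_type/SPbar_mult_continuous.
Qed.
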